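(* Let $p$ be an odd prime, $r$ a prime with $r\equiv3\pmod4$ and $\left(\frac{p}{r}\right)=1$, and $a\in\mathbb{N}^+\cup\{\infty\}$. Then in the structure $\left(\mathbb{F}_{p^a}[t^{r^{-\infty}}];0,1,t,+,\times\right)$ there is a uniformly parametrizable family of definable subsets all of whose members are finite and which contains sets of arbitrarily large finite cardinality.
   Context: $\mathbb{F}_{p^a}[t^{r^{-\infty}}]=\bigcup_{n\ge0}\mathbb{F}_{p^a}[t^{r^{-n}}]$ for a compatible system of roots $t^{r^{-n}}$, with $\mathbb{F}_{p^\infty}$ meaning an algebraic closure of $\mathbb{F}_p$. A family $\mathcal{F}$ of subsets of a structure with universe $S$ is uniformly parametrizable if there exist a definable set $C\subseteq S^k$ and a first-order formula $\varphi(x,y_1,\dots,y_k)$ such that for every $F\subseteq S$: $F\in\mathcal{F}$ iff there is $\bar y\in C$ with $F=\{x\in S:\varphi(x,\bar y)\}$. *)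

From HB Require Import structures.
From mathcomp Require Import all_boot all_order all_algebra.
Set Implicit Arguments. Unset Strict Implicit. Unset Printing Implicit Defensive.
Import GRing.Theory.
Local Open Scope ring_scope.

Inductive term : Type :=
  | TVar of nat
  | TZero
  | TOne
  | TCt
  | TAdd of term & term
  | TMul of term & term.

Inductive formula : Type :=
  | FEq of term & term
  | FNot of formula
  | FAnd of formula & formula
  | FEx of nat & formula.

Section Semantics.
Variables (R : comNzRingType) (t : R).

Fixpoint teval (e : nat -> R) (u : term) : R :=
  match u with
  | TVar i => e i
  | TZero => 0
  | TOne => 1
  | TCt => t
  | TAdd u1 u2 => teval e u1 + teval e u2
  | TMul u1 u2 => teval e u1 * teval e u2
  end.

Definition upd (e : nat -> R) (i : nat) (v : R) : nat -> R :=
  fun j => if j == i then v else e j.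

Fixpoint holds (e : nat -> R) (f : formula) : Prop :=
  match f with
  | FEq u1 u2 => teval e u1 = teval e u2
  | FNot f1 => ~ holds e f1
  | FAnd f1 f2 => holds e f1 /\ holds e f2
  | FEx i f1 => exists v : R, holds (upd e i v) f1
  end.

Definition env (ys : seq R) : nat -> R := fun i => nth 0 ys i.

End Semantics.

Definition legendre_one (p r : nat) : Prop :=
  ~~ (r %| p)%N /\ exists x : nat, (x ^ 2 = p %[mod r])%N.

(** K is F_{p^a}: for a = Some n, a field with exactly p^n elements;
    for a = None (a = infinity), an algebraic closure of F_p, i.e. an
    algebraically closed field of characteristic p all of whose elements
    are algebraic over the prime field. *)
Definition is_Fpa (p : nat) (a : option nat) (K : fieldType) : Prop :=
  match a with
  | Some n => exists s : seq K, [/\ uniq s, size s = (p ^ n)%N & forall x, x \in s]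
  | None => [/\ GRing.closed_field_axiom K, p \in [pchar K] &
              forall x : K, exists q : {poly K},
                [/\ q != 0, forall i, exists m : nat, q`_i = m%:R & root q x]]
  end.

(** R, together with iota : K -> R and t : R, is (isomorphic to)
    K[t^{r^{-oo}}] = \bigcup_n K[t^{r^{-n}}], for a compatible system
    of roots tn n = t^{r^{-n}}, t transcendental over K. *)
Definition is_Kt_rinf (K : fieldType) (r : nat) (R : comNzRingType)
    (iota : {rmorphism K -> R}) (t : R) : Prop :=
  exists tn : nat -> R,
    [/\ tn 0%N = t,
        forall n, tn n.+1 ^+ r = tn n,
        forall n (P : {poly K}), (map_poly iota P).[tn n] = 0 -> P = 0 &
        forall x : R, exists n (P : {poly K}), x = (map_poly iota P).[tn n]].

(** The family {phi(R, ys) : ys \in C} (C defined by psi, ys of length k,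
    x = variable 0, y_i = variable i+1 in phi) is uniformly parametrizable;
    all members finite, arbitrarily large finite members. *)
Definition unif_param_finite_unbounded (R : comNzRingType) (t : R)
    (k : nat) (psi phi : formula) : Prop :=
  (forall ys : seq R, size ys = k -> holds t (env ys) psi ->
     exists s : seq R, forall x : R, holds t (env (x :: ys)) phi -> x \in s)
  /\
  (forall N : nat, exists ys : seq R,
     [/\ size ys = k, holds t (env ys) psi &
         exists s : seq R, [/\ uniq s, (N <= size s)%N &
           forall x, x \in s -> holds t (env (x :: ys)) phi]]).

From mathcomp Require Import all_boot all_order all_algebra.
From mathcomp Require Import ring.
From Stdlib Require Import Classical.
Set Implicit Arguments. Unset Strict Implicit. Unset Printing Implicit Defensive.
Import GRing.Theory.
Local Open Scope ring_scope.

(* The parameters y are the nonzero t-smooth elements: those whose non-unit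
   divisors all share a non-unit divisor with t.  In K[t^{r^-oo}] these are
   exactly the monomials c t^q.  Indeed, divisors of powers of t are monomials;
   conversely, if x = X^i G at some level t^{r^-n} with G(0) <> 0, then G is a
   divisor of x, and a non-unit common divisor of G and t would be a monomial of
   positive degree dividing G, forcing G(0) = 0; so G is a unit, a constant.  The
   members of the family at y are the t-smooth x dividing y with
   x = 1 mod (t - 1).  A monomial c t^{i/r^n} with this congruence has c = 1
   and r^n | i, because X^{r^m} - 1 | X^k - 1 forces r^m | k; so the members
   are exactly the powers t^j dividing y, and there are k + 1 of them when
   y = t^k. *)

Section Monomials.
Variable K : fieldType.

Lemma comp_scaleXn (c : K) i e : (c *: 'X^i) \Po 'X^e = c *: 'X^(i * e).
Proof. by rewrite linearZ /= comp_Xn_poly -exprM mulnC. Qed.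

Lemma horner0_comp_Xn (P : {poly K}) e : (0 < e)%N -> (P \Po 'X^e).[0] = P.[0].
Proof. by move=> e_gt0; rewrite horner_comp hornerXn expr0n eqn0Ngt e_gt0. Qed.

Lemma dvdp_XnP (A : {poly K}) k :
  A %| 'X^k -> exists2 c, c != 0 & exists i, A = c *: 'X^i.
Proof.
have -> : ('X^k : {poly K}) = ('X - 0%:P) ^+ k by rewrite polyC0 subr0.
case/dvdp_exp_XsubCP => i _ /eqpP [[c1 c2] /= /andP [c10 c20]].
rewrite polyC0 subr0 => e; exists (c2 / c1); first by rewrite mulf_neq0 ?invr_eq0.
by exists i; rewrite mulrC -scalerA -e scalerA mulVf // scale1r.
Qed.

Lemma dvdp_scaleXn (c : K) i k : c != 0 -> 'X^i %| c *: 'X^k -> (i <= k)%N.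
Proof.
move=> c0 /dvdp_leq; rewrite scaler_eq0 (negPf c0) -size_poly_eq0 size_polyXn.
by rewrite size_scale // !size_polyXn ltnS; apply.
Qed.

Lemma dvdn_of_dvdp_Xn_sub1 (n m : nat) : (0 < n)%N ->
  ('X^n - 1 : {poly K}) %| 'X^m - 1 -> (n %| m)%N.
Proof.
move=> n_gt0 dvd_nm; rewrite /dvdn; apply: contraT; rewrite -lt0n => rem_gt0.
have dvd_quo : ('X^n - 1 : {poly K}) %| 'X^(m %/ n * n) - 1.
  by rewrite mulnC exprM (subrX1 'X^n) dvdp_mulIl.
have dvd_rem : ('X^n - 1 : {poly K}) %| 'X^(m %% n) - 1.
  have -> : ('X^(m %% n) - 1 : {poly K}) =
      ('X^m - 1) - 'X^(m %% n) * ('X^(m %/ n * n) - 1).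
    by rewrite {2}(divn_eq m n) exprD; ring.
  by rewrite dvdp_sub // dvdp_mull.
have := dvdp_leq _ dvd_rem; rewrite -size_poly_eq0 -polyC1 !size_XnsubC //.
by rewrite ltnS leqNgt ltn_mod n_gt0; apply.
Qed.

End Monomials.

Section Divisibility.
Variable R : comNzRingType.

Definition rdvd (x y : R) := exists v, x * v = y.
Definition runit (x : R) := rdvd x 1.
Definition t_smooth (t x : R) := forall z, rdvd z x ->
  runit z \/ exists w, [/\ rdvd w z, rdvd w t & ~ runit w].

Lemma rdvdxx x : rdvd x x.
Proof. by exists 1; rewrite mulr1. Qed.

Lemma rdvd_subX1 (x : R) n : rdvd (x - 1) (x ^+ n - 1).
Proof. by exists (\sum_(i < n) x ^+ i); rewrite subrX1. Qed.

Definition tpow_divisor (t y x : R) :=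
  [/\ rdvd x y, rdvd (t - 1) (x - 1) & t_smooth t x].

End Divisibility.

Section RootTower.
Variables (K : fieldType) (R : comNzRingType) (iota : {rmorphism K -> R}).
Variables (r : nat) (tn : nat -> R) (t : R).
Hypotheses (r_gt0 : (0 < r)%N) (tn0 : tn 0 = t) (tnS : forall n, tn n.+1 ^+ r = tn n).
Hypothesis ev_eq0 : forall n (P : {poly K}), (map_poly iota P).[tn n] = 0 -> P = 0.
Hypothesis ev_surj : forall x : R, exists n (P : {poly K}), x = (map_poly iota P).[tn n].

Definition ev n (P : {poly K}) := (map_poly iota P).[tn n].

Lemma evM n P Q : ev n (P * Q) = ev n P * ev n Q.
Proof. by rewrite /ev rmorphM hornerM. Qed.

Lemma evB n P Q : ev n (P - Q) = ev n P - ev n Q.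
Proof. by rewrite /ev rmorphB hornerD hornerN. Qed.

Lemma evC n c : ev n c%:P = iota c.
Proof. by rewrite /ev map_polyC hornerC. Qed.

Lemma ev1 n : ev n 1 = 1.
Proof. by rewrite -polyC1 evC rmorph1. Qed.

Lemma evXn n k : ev n 'X^k = tn n ^+ k.
Proof. by rewrite /ev map_polyXn hornerXn. Qed.

Lemma ev_inj n : injective (ev n).
Proof.
move=> P Q e; apply/eqP; rewrite -subr_eq0; apply/eqP; apply: (ev_eq0 (n := n)).
by rewrite rmorphB hornerD hornerN -/(ev n P) e subrr.
Qed.

Lemma ev_comp n m P : (n <= m)%N -> ev n P = ev m (P \Po 'X^(r ^ (m - n))).
Proof.
move=> le_nm; rewrite /ev map_comp_poly map_polyXn horner_comp hornerXn.
rewrite -{1}(subnK le_nm); elim: (m - n)%N => [|k IHk]; first by rewrite expr1.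
by rewrite addSn expnS exprM tnS.
Qed.

Lemma ev_surj_above n x : exists2 m, (n <= m)%N & exists Q, x = ev m Q.
Proof.
have [m [Q ->]] := ev_surj x; exists (maxn n m); first exact: leq_maxl.
by exists (Q \Po 'X^(r ^ (maxn n m - m))); apply/ev_comp/leq_maxr.
Qed.

Lemma rdvd_ev n m P Q : rdvd (ev n P) (ev m Q) ->
  exists2 l, (n <= l)%N && (m <= l)%N & P \Po 'X^(r ^ (l - n)) %| Q \Po 'X^(r ^ (l - m)).
Proof.
case=> v PvQ; have [l le_nml [V def_v]] := ev_surj_above (maxn n m) v.
rewrite geq_max in le_nml; case/andP: le_nml => le_nl le_ml.
exists l; first by rewrite le_nl le_ml.
move: PvQ; rewrite def_v (ev_comp P le_nl) (ev_comp Q le_ml) -evM => /ev_inj <-.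
exact: dvdp_mulIl.
Qed.

Lemma t_ev n : t = ev n 'X^(r ^ n).
Proof.
by rewrite -tn0 -[tn 0]expr1 -evXn (ev_comp _ (leq0n n)) comp_Xn_poly subn0 expr1.
Qed.

Lemma tpow_ev j n : t ^+ j = ev n 'X^(j * r ^ n).
Proof. by rewrite (t_ev n) !evXn -exprM mulnC. Qed.

Lemma runit_ev n P : runit (ev n P) -> exists c, P = c%:P.
Proof.
rewrite /runit -(ev1 0) => /rdvd_ev [l /andP [le_nl _]].
rewrite -polyC1 comp_polyC polyC1 dvdp1 => /eqP/eq_leq/size1_polyC P_const.
exists (P \Po 'X^(r ^ (l - n)))`_0; apply: (@ev_inj n).
by rewrite (ev_comp P le_nl) {1}P_const !evC.
Qed.

Lemma runit_evC n c : c != 0 -> runit (ev n c%:P).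
Proof. by move=> c0; exists (iota c^-1); rewrite evC -rmorphM mulfV ?rmorph1. Qed.

Lemma ev_scaleXn_nonunit n (c : K) l : c != 0 -> (0 < l)%N ->
  ~ runit (ev n (c *: 'X^l)).
Proof.
move=> c0 l_gt0 /runit_ev [d /(congr1 (fun p : {poly K} => size p))] /=.
rewrite size_scale // size_polyXn size_polyC; case: (d != 0) => //.
by case: l l_gt0.
Qed.

Lemma rdvd_ev_scaleXn n (a b : K) i l : a != 0 -> (i <= l)%N ->
  rdvd (ev n (a *: 'X^i)) (ev n (b *: 'X^l)).
Proof.
move=> a0 le_il; exists (ev n ((b / a) *: 'X^(l - i))); rewrite -evM.
by rewrite -scalerAr -scalerAl -exprD subnKC // scalerA divfK.
Qed.

Lemma rdvd_tpow w j : rdvd w (t ^+ j) ->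
  exists n, exists2 c, c != 0 & exists l, w = ev n (c *: 'X^l).
Proof.
have [m _ [W ->]] := ev_surj_above 0 w; rewrite (tpow_ev j 0).
case/rdvd_ev => l /andP [le_ml _].
rewrite comp_Xn_poly -exprM => /dvdp_XnP [c c0 [i Wl]].
by exists l; exists c => //; exists i; rewrite -Wl -ev_comp.
Qed.

Lemma tpow_neq0 j : t ^+ j != 0.
Proof.
rewrite (tpow_ev j 0); apply: contra_neq (monic_neq0 (monicXn K _)).
exact: ev_eq0.
Qed.

Lemma tpow_inj : injective (fun j => t ^+ j).
Proof.
move=> i j /=; rewrite !(tpow_ev _ 0) => /ev_inj /(congr1 (fun p : {poly K} => size p)).
by rewrite /= !size_polyXn expn0 !muln1 => -[].
Qed.

Lemma t_nonunit : ~ runit t.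
Proof.
by rewrite (t_ev 0) -[X in ev _ X]scale1r; apply: ev_scaleXn_nonunit; rewrite ?oner_eq0.
Qed.

Lemma t_smooth_tpow j : t_smooth t (t ^+ j).
Proof.
move=> z /rdvd_tpow [m [c c0 [[|l] ->]]].
  by left; rewrite expr0 alg_polyC; apply: runit_evC.
have t_monomial : t = ev m (1 *: 'X^(r ^ m)) by rewrite scale1r -t_ev.
right; have [le_lr | lt_rl] := leqP l.+1 (r ^ m).
- exists (ev m (c *: 'X^(l.+1))); split; first exact: rdvdxx.
    by rewrite t_monomial; apply: rdvd_ev_scaleXn.
  exact: ev_scaleXn_nonunit.
- exists t; split; [|exact: rdvdxx|exact: t_nonunit].
  by rewrite t_monomial; apply: rdvd_ev_scaleXn; [exact: oner_neq0 | exact: ltnW].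
Qed.

Lemma rdvd_ev_root0 m n (a : K) l G : (0 < l)%N ->
  rdvd (ev m (a *: 'X^l)) (ev n G) -> root G 0.
Proof.
move=> l_gt0 /rdvd_ev [k _]; rewrite comp_scaleXn => /root_dvdp root_G.
rewrite /root -(@horner0_comp_Xn _ G (r ^ (k - n))) ?expn_gt0 ?r_gt0 //; apply: root_G.
have e_gt0 : (0 < l * r ^ (k - m))%N by rewrite muln_gt0 l_gt0 expn_gt0 r_gt0.
by rewrite /root hornerZ hornerXn expr0n eqn0Ngt e_gt0 mulr0.
Qed.

Lemma t_smooth_monomial x : x != 0 -> t_smooth t x ->
  exists n, exists2 c, c != 0 & exists i, x = ev n (c *: 'X^i).
Proof.
move=> x0 x_smooth; have [n [P def_x]] := ev_surj x; rewrite -/(ev n P) in def_x.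
have P0 : P != 0 by apply: contraNneq x0 => P0; rewrite def_x P0 /ev rmorph0 horner0.
have [i [G G0 def_P]] := multiplicity_XsubC P 0.
rewrite P0 polyC0 subr0 /= in G0 def_P.
have G_dvd_x : rdvd (ev n G) x by exists (ev n 'X^i); rewrite def_x def_P evM.
case: (x_smooth _ G_dvd_x) => [/runit_ev [c def_G] | [w [w_dvd_G]]].
  exists n, c; first by apply: contraNneq G0 => c0; rewrite def_G c0 root0.
  by exists i; rewrite def_x def_P def_G mul_polyC.
rewrite -[t]expr1 => /rdvd_tpow [m [a a0 [[|l] def_w]]] w_nonunit.
  by case: w_nonunit; rewrite def_w expr0 alg_polyC; apply: runit_evC.
by case/negP: G0; apply: (@rdvd_ev_root0 m n a l.+1); rewrite -?def_w.
Qed.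

Lemma cong1_monomial_tpow x n (c : K) i : x = ev n (c *: 'X^i) ->
  rdvd (t - 1) (x - 1) -> exists j, x = t ^+ j.
Proof.
move=> ->; rewrite {1}(t_ev 0) -{1}(ev1 0) -(ev1 n) -!evB.
case/rdvd_ev => l /andP [_ le_nl].
rewrite !comp_polyB -polyC1 !comp_polyC comp_Xn_poly expn0 expr1 comp_scaleXn subn0.
move=> dvd_cX.
have c1 : c = 1.
  have /(root_dvdp dvd_cX) : root ('X^(r ^ l) - 1%:P : {poly K}) 1.
    by rewrite /root !hornerE expr1n subrr.
  by rewrite /root !hornerE expr1n mulr1 subr_eq0 => /eqP.
move: dvd_cX; rewrite c1 !scale1r polyC1 => /dvdn_of_dvdp_Xn_sub1.
rewrite expn_gt0 r_gt0 -(subnKC le_nl) expnD subnKC // => /(_ isT).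
rewrite dvdn_pmul2r ?expn_gt0 ?r_gt0 // => /dvdnP [j def_i].
by exists j; rewrite def_i (tpow_ev j n).
Qed.

Lemma tpow_dvd_monomial j m (c : K) k : c != 0 ->
  rdvd (t ^+ j) (ev m (c *: 'X^k)) -> (j <= k)%N.
Proof.
move=> c0; rewrite (tpow_ev j m) => /rdvd_ev [l _].
rewrite comp_Xn_poly -exprM comp_scaleXn => /(dvdp_scaleXn c0).
rewrite mulnC leq_pmul2r ?expn_gt0 ?r_gt0 //; apply: leq_trans.
by rewrite leq_pmulr ?expn_gt0 ?r_gt0.
Qed.

Lemma tpow_divisor_finite y : y != 0 -> t_smooth t y ->
  exists s : seq R, forall x, tpow_divisor t y x -> x \in s.
Proof.
move=> y0 /(t_smooth_monomial y0) [n [c c0 [k def_y]]].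
exists (mkseq (fun j => t ^+ j) k.+1) => x [x_dvd_y x_cong x_smooth].
have x0 : x != 0 by apply: contraNneq y0 => x0; case: x_dvd_y => v <-; rewrite x0 mul0r.
have [m [d _ [i def_x]]] := t_smooth_monomial x0 x_smooth.
have [j def_xj] := cong1_monomial_tpow def_x x_cong.
apply/mapP; exists j; rewrite // mem_iota ltnS.
by apply: (tpow_dvd_monomial (m := n) c0); rewrite -def_xj -def_y.
Qed.

Lemma tpow_divisor_unbounded N : exists y, [/\ y != 0, t_smooth t y &
  exists s : seq R, [/\ uniq s, (N <= size s)%N & forall x, x \in s -> tpow_divisor t y x]].
Proof.
exists (t ^+ N); split; [exact: tpow_neq0 | exact: t_smooth_tpow |].
exists (mkseq (fun j => t ^+ j) N.+1); split.
- exact/mkseq_uniq/tpow_inj.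
- by rewrite size_mkseq.
move=> x /mapP [j]; rewrite mem_iota ltnS => le_jN ->.
split; [|exact: rdvd_subX1|exact: t_smooth_tpow].
by exists (t ^+ (N - j)); rewrite -exprD subnKC.
Qed.

End RootTower.

Definition FOr f g := FNot (FAnd (FNot f) (FNot g)).
Definition FImp f g := FNot (FAnd f (FNot g)).
Definition FAll i f := FNot (FEx i (FNot f)).
Definition FDvd (a b : term) i := FEx i (FEq (TMul a (TVar i)) b).
Definition FUnit (a : term) i := FDvd a TOne i.

(* [t_smooth t x_0]; the variables x_2, ..., x_5 are bound inside. *)
Definition FSmooth :=
  FAll 2 (FImp (FDvd (TVar 2) (TVar 0) 3)
    (FOr (FUnit (TVar 2) 3)
         (FEx 4 (FAnd (FDvd (TVar 4) (TVar 2) 5)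
                      (FAnd (FDvd (TVar 4) TCt 5) (FNot (FUnit (TVar 4) 5))))))).

Definition smooth_nonzero_formula := FAnd (FNot (FEq (TVar 0) TZero)) FSmooth.

(* The language has no subtraction: t - 1 | x_0 - 1 is written
   exists w, t w + 1 = x_0 + w. *)
Definition tpow_divisor_formula :=
  FAnd (FDvd (TVar 0) (TVar 1) 2)
    (FAnd (FEx 2 (FEq (TAdd (TMul TCt (TVar 2)) TOne) (TAdd (TVar 0) (TVar 2))))
          FSmooth).

Section FormulaSemantics.
Variables (R : comNzRingType) (t : R).

Lemma holds_and e f g : holds t e (FAnd f g) <-> holds t e f /\ holds t e g.
Proof. by []. Qed.

Lemma holds_FSmooth e : holds t e FSmooth <-> t_smooth t (e 0).
Proof.
rewrite /FSmooth /= /upd /=; split.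
- move=> H z z_dvd; apply: NNPP => nH; apply: H; exists z => -[]; split=> // nn; apply: nn.
  split=> [z_unit | [w [w_z [w_t w_nonunit]]]]; apply: nH; first by left.
  by right; exists w.
- move=> H [z nn]; apply: nn => -[z_dvd nn]; apply: nn => -[z_nonunit nE].
  by case: (H z z_dvd) => [// | [w [w_z w_t w_nonunit]]]; apply: nE; exists w.
Qed.

Lemma holds_smooth_nonzero y :
  holds t (env [:: y]) smooth_nonzero_formula <-> y != 0 /\ t_smooth t y.
Proof.
rewrite /smooth_nonzero_formula holds_and holds_FSmooth.
by split=> -[/eqP y0 y_smooth].
Qed.

Lemma holds_tpow_divisor x y :
  holds t (env [:: x; y]) tpow_divisor_formula <-> tpow_divisor t y x.
Proof.
have cong1P : (exists w, t * w + 1 = x + w) <-> rdvd (t - 1) (x - 1).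
  split=> -[w e]; exists w.
    by rewrite -(addrK w x) -e; ring.
  by rewrite -(subrK 1 x) -e; ring.
rewrite /tpow_divisor_formula !holds_and holds_FSmooth /= cong1P.
by split=> [[x_dvd_y [x_cong x_smooth]] | [x_dvd_y x_cong x_smooth]].
Qed.

End FormulaSemantics.

Theorem theorem4p14 (p r : nat) (a : option nat) (K : fieldType)
    (R : comNzRingType) (iota : {rmorphism K -> R}) (t : R) :
  prime p -> odd p -> prime r -> (r %% 4 = 3)%N -> legendre_one p r ->
  (if a is Some n then (0 < n)%N else true) ->
  is_Fpa p a K -> is_Kt_rinf r iota t ->
  exists (k : nat) (psi phi : formula), unif_param_finite_unbounded t k psi phi.
Proof.
(* The family works over any field K as soon as r > 0. *)
move=> _ _ /prime_gt0 r_gt0 _ _ _ _ [tn [tn0 tnS ev_eq0 ev_surj]].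
exists 1%N, smooth_nonzero_formula, tpow_divisor_formula; split.
- case=> [|y [|//]] // _ /holds_smooth_nonzero [y0 y_smooth].
  have [s s_divisors] := tpow_divisor_finite r_gt0 tn0 tnS ev_eq0 ev_surj y0 y_smooth.
  by exists s => x /holds_tpow_divisor /s_divisors.
move=> N; have [y [y0 y_smooth [s [s_uniq s_size s_divisors]]]] :=
  tpow_divisor_unbounded tn0 tnS ev_eq0 ev_surj N.
exists [:: y]; split => //; first exact/holds_smooth_nonzero.
by exists s; split=> // x /s_divisors /holds_tpow_divisor.
Qed.
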